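(* The class of Subgraph MPNNs cannot count $8$-cycles at graph level, and cannot count $8$-paths at graph level. That is, there exist graphs $G_1,G_2$ with $C(8\text{-cycle},G_1)\neq C(8\text{-cycle},G_2)$ such that $h_{G_1}=h_{G_2}$ for every Subgraph MPNN, and there exist graphs $G_1,G_2$ with $C(8\text{-path},G_1)\neq C(8\text{-path},G_2)$ such that $h_{G_1}=h_{G_2}$ for every Subgraph MPNN.
   Context: Graphs are finite, simple, undirected, $G=(V,E)$, possibly carrying node attributes $x_v$ and edge attributes $e_{u,v}$ (a fixed constant when absent). $N(v)$ is the neighbour set of $v$. For $L\ge 1$, an $L$-path is a sequence of edges $(v_1,v_2),(v_2,v_3),\dots,(v_L,v_{L+1})$ of $G$ with $v_1,\dots,v_{L+1}$ pairwise distinct; for $L\ge 3$, an $L$-cycle is such a sequence with $v_1,\dots,v_L$ pairwise distinct and $v_{L+1}=v_1$. Two paths (resp. cycles) are identified when their edge sets coincide. $C(L\text{-cycle},G)$ and $C(L\text{-path},G)$ denote the numbers of inequivalent $L$-cycles and $L$-paths of $G$. A class $\mathcal F$ of functions on graphs can count a substructure $S$ at graph level if for all graphs $G_1,G_2$ with $C(S,G_1)\ne C(S,G_2)$ there is $f\in\mathcal F$ with $f(G_1)\neq f(G_2)$. Subgraph MPNNs. A Subgraph MPNN is specified by: (1) a subgraph extraction rule, either node deletion, $(V_i,E_i)=(V\setminus\{i\},E\setminus\{(i,j):j\in N(i)\})$, or the $K$-hop ego-network for some integer $K\ge1$, i.e. $(V_i,E_i)$ is the subgraph of $G$ induced by the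 nodes at shortest-path distance at most $K$ from $i$; (2) a node labeling $z_{i,j}$, which is either absent, identity labeling $z_{i,j}=\mathbb 1_{i=j}$, or shortest path distance $z_{i,j}=\mathrm{spd}(i,j)$ in $G$; (3) a number of layers $T$ and arbitrary functions $M_t$ (with values in some $\mathbb R^{d_t}$) and $U_t$, $t=0,\dots,T-1$; (4) arbitrary readout functions $R_{\text{node}},R_{\text{graph}}$ on finite multisets. For each root $i\in V$ and $j\in V_i$: $h^{(0)}_{i,j}=x_j\oplus z_{i,j}$ ($\oplus$ = concatenation), $h^{(t+1)}_{i,j}=U_t\big(h^{(t)}_{i,j},\sum_{k\in N_i(j)}M_t(h^{(t)}_{i,j},h^{(t)}_{i,k},e_{j,k})\big)$ where $N_i(j)=\{k\in V_i:(j,k)\in E_i\}$; then $h_i=R_{\text{node}}(\{\!\{h^{(T)}_{i,j}:j\in V_i\}\!\})$ and $h_G=R_{\text{graph}}(\{\!\{h_i:i\in V\}\!\})$. The graph-level function computed is $G\mapsto h_G$, and the class of Subgraph MPNNs consists of all such choices. *)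

From HB Require Import structures.
From mathcomp Require Import all_boot all_order all_algebra.
From mathcomp Require Import reals.
Set Implicit Arguments. Unset Strict Implicit. Unset Printing Implicit Defensive.
Import Order.TTheory GRing.Theory Num.Theory.
Local Open Scope ring_scope.

Record graph := Graph {
  gV :> finType;
  gadj : rel gV;
  gadj_sym : symmetric gadj;
  gadj_irr : irreflexive gadj }.

Section GraphDefs.
Variable G : graph.

Fixpoint within (n : nat) (i j : G) : bool :=
  if n is n'.+1 then
    within n' i j || [exists k : G, within n' i k && @gadj G k j]
  else i == j.

(* Shortest path distance in G: [Some d], or [None] if unreachable.
   (Any reachable vertex is at distance < #|G|.) *)
Definition spd (i j : G) : option nat :=
  let d := find (fun n => within n i j) (iota 0 #|G|) in
  if (d < #|G|)%N then Some d else None.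

Definition path_edges (s : seq G) : {set {set G}} :=
  [set [set p.1; p.2] | p in zip s (behead s)].
Definition cycle_edges (s : seq G) : {set {set G}} :=
  [set [set p.1; p.2] | p in zip s (rot 1 s)].

Definition is_path_seq (L : nat) (s : seq G) : bool :=
  [&& (1 <= L)%N, size s == L.+1, uniq s &
      (if s is x :: p then path (@gadj G) x p else false)].
Definition is_cycle_seq (L : nat) (s : seq G) : bool :=
  [&& (3 <= L)%N, size s == L, uniq s & cycle (@gadj G) s].

(* Number of inequivalent L-paths / L-cycles (identified by edge sets). *)
Definition count_paths (L : nat) : nat :=
  #|[set path_edges (val s) | s in [pred s : L.+1.-tuple G | is_path_seq L s]]|.
Definition count_cycles (L : nat) : nat :=
  #|[set cycle_edges (val s) | s in [pred s : L.-tuple G | is_cycle_seq L s]]|.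

End GraphDefs.

Inductive extraction := NodeDeletion | EgoNet of nat (* K-hop, K >= 1 *).
Inductive labeling := NoLabel | IdLabel | SpdLabel.

(* dimension of the initial feature h^(0) = x_j (+) z_{i,j};
   node attributes are absent, so h^(0) = z_{i,j}. *)
Definition labdim (l : labeling) : nat :=
  match l with NoLabel => 0%N | IdLabel => 1%N | SpdLabel => 1%N end.

Section MPNN.
Variable R : realType.

Definition sdim (l : labeling) (edim : nat -> nat) (t : nat) : nat :=
  if t is t'.+1 then edim t' else labdim l.

Record mpnn := MPNN {
  rule : extraction;
  lab : labeling;
  nlayers : nat;
  edim : nat -> nat;                   (* dimension of h^(t+1) *)
  mdim : nat -> nat;
  Msg : forall t, 'rV[R]_(sdim lab edim t) -> 'rV[R]_(sdim lab edim t) ->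
                  'rV[R]_(mdim t);
  Upd : forall t, 'rV[R]_(sdim lab edim t) -> 'rV[R]_(mdim t) ->
                  'rV[R]_(sdim lab edim t.+1);
  ndim : nat;
  Rnode : seq 'rV[R]_(sdim lab edim nlayers) -> 'rV[R]_ndim;
  Rnode_multiset : forall s1 s2, perm_eq s1 s2 -> Rnode s1 = Rnode s2;
  gdim : nat;
  Rgraph : seq 'rV[R]_ndim -> 'rV[R]_gdim;
  Rgraph_multiset : forall s1 s2, perm_eq s1 s2 -> Rgraph s1 = Rgraph s2 }.

Definition valid_mpnn (m : mpnn) : Prop :=
  match rule m with NodeDeletion => True | EgoNet K => (1 <= K)%N end.

Variable m : mpnn.
Variable G : graph.

Definition in_sub (i j : G) : bool :=
  match rule m with
  | NodeDeletion => j != i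
  | EgoNet K => within K i j
  end.

(* k is in N_i(j): k in V_i and (j,k) in E_i (E_i is induced on V_i in both
   rules; for node deletion this removes exactly the edges incident to i). *)
Definition sub_nbr (i j k : G) : bool := in_sub i j && in_sub i k && @gadj G j k.

Definition zlabel (i j : G) : 'rV[R]_(labdim (lab m)) :=
  match lab m as l return 'rV[R]_(labdim l) with
  | NoLabel => 0
  | IdLabel => const_mx (if i == j then 1 else 0)
  | SpdLabel => const_mx (match spd i j with Some d => d%:R | None => -1 end)
  end.

Fixpoint hstate (t : nat) : G -> G -> 'rV[R]_(sdim (lab m) (edim m) t) :=
  match t as t0 return G -> G -> 'rV[R]_(sdim (lab m) (edim m) t0) with
  | 0%N => fun i j => zlabel i j
  | t'.+1 => fun i j =>
      @Upd m t' (hstate t' i j)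
        (\sum_(k : G | sub_nbr i j k) @Msg m t' (hstate t' i j) (hstate t' i k))
  end.

Definition hnode (i : G) : 'rV[R]_(ndim m) :=
  @Rnode m [seq hstate (nlayers m) i j | j <- enum [pred j | in_sub i j]].

Definition hgraph : 'rV[R]_(gdim m) :=
  @Rgraph m [seq hnode i | i <- enum G].

End MPNN.

(* The 4x4 rook's graph and the Shrikhande graph are both strongly regular with
   parameters (16, 6, 2, 2).  In such a graph any two vertices are equal, adjacent or
   at distance 2, and the number of neighbours of j in each of these three classes
   relative to a root i depends only on the class of (i, j).  By induction on the
   layers, every state h_{i,j} of a Subgraph MPNN is therefore a function of the class
   of (i, j) alone, and h_G is the same for both graphs.  Yet an exhaustive search
   finds 11952 versus 11688 8-cycles and 880128 versus 877440 8-paths: the edge set of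
   a simple path (cycle) determines its vertex sequence up to reversal (and rotation),
   so each path is traversed by 2 and each L-cycle by 2L vertex sequences. *)

From HB Require Import structures.
From mathcomp Require Import all_boot all_order all_algebra.
From mathcomp Require Import reals.
From mathcomp Require Import zify.
Import GRing.Theory.
Set Implicit Arguments. Unset Strict Implicit. Unset Printing Implicit Defensive.

(** * Edge sets of simple paths and cycles *)

Lemma set2_eq (T : finType) (x y a b : T) :
  [set x; y] = [set a; b] -> (x = a /\ y = b) \/ (x = b /\ y = a).
Proof.
move=> E.
have /set2P xab : x \in [set a; b] by rewrite -E set21.
have /set2P yab : y \in [set a; b] by rewrite -E set22.
have /set2P axy : a \in [set x; y] by rewrite E set21.
have /set2P bxy : b \in [set x; y] by rewrite E set22.
by case: xab yab axy bxy => -> [] -> [] ? [] ?; subst; tauto.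
Qed.

Lemma modS_small L i : i < L -> i.+1 %% L = if i.+1 == L then 0 else i.+1.
Proof. by move=> hi; case: eqP => [->|ne]; rewrite ?modnn // modn_small; lia. Qed.

Definition succ_mod (L : nat) : rel nat := fun i j => (i < L) && (j == i.+1 %% L).

Lemma nth_rot (T : Type) (x0 : T) (s : seq T) n i : n <= size s -> i < size s ->
  nth x0 (rot n s) i = nth x0 s ((n + i) %% size s).
Proof.
move=> hn hi; rewrite /rot nth_cat size_drop.
case: ltnP => h; first by rewrite nth_drop modn_small //; lia.
rewrite nth_take; last lia.
have -> : n + i = (i - (size s - n)) + size s by lia.
by rewrite modnDr modn_small //; lia.
Qed.

Lemma next_nth_mod (T : eqType) (x0 : T) (s : seq T) i : uniq s -> i < size s ->
  next s (nth x0 s i) = nth x0 s (i.+1 %% size s).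
Proof.
case: s => [//|y p] us hi; rewrite next_nth mem_nth // index_uniq // modS_small //.
case: eqP => [[ei]|ne]; first by rewrite nth_default ?ei.
by rewrite /= (set_nth_default x0) //; move: hi ne => /=; lia.
Qed.

Section OrientedWalks.
Variables (T : eqType) (r : rel T).
Hypothesis r_inj : forall a b c, r a c -> r b c -> a = b.

Lemma path_keeps_orientation x y p : uniq [:: x, y & p] -> r x y ->
  path (fun a b => r a b || r b a) y p -> path r y p.
Proof.
elim: p x y => //= z p IH x y /andP[xN uyp] rxy /andP[/orP[ryz | rzy] pz].
  by rewrite ryz (IH y z) //; case/andP: uyp.
by move: xN; rewrite (r_inj rzy rxy) !inE eqxx orbT.
Qed.

End OrientedWalks.

(* A walk along the symmetric closure of a bi-unique relation can never turn back
   without repeating a vertex. *)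
Lemma sorted_symclosure (T : eqType) (r : rel T) s :
  (forall a b c, r a c -> r b c -> a = b) -> (forall a b c, r a b -> r a c -> b = c) ->
  uniq s -> sorted (fun a b => r a b || r b a) s -> sorted r s \/ sorted r (rev s).
Proof.
move=> r_inj r_fun; case: s => [|x [|y p]]; try by left.
rewrite rev_sorted /= => us /andP[/orP[rxy | ryx] pp].
  by left; rewrite rxy (path_keeps_orientation r_inj us rxy pp).
right; rewrite ryx (path_keeps_orientation (r := fun a b => r b a) _ us) //.
  by move=> a b c rca rcb; apply: r_fun rca rcb.
by rewrite (eq_path (e' := fun a b => r a b || r b a)) // => a b; rewrite orbC.
Qed.

Section EdgeSets.
Variable G : graph.
Implicit Types (s t : seq G) (x y : G).

Lemma path_edgesP s x0 E :
  reflect (exists2 i, i.+1 < size s & E = [set nth x0 s i; nth x0 s i.+1]) (E \in path_edges s).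
Proof.
have nth_pairs i : i.+1 < size s ->
    nth (x0, x0) (zip s (behead s)) i = (nth x0 s i, nth x0 s i.+1).
  by move=> hi; rewrite nth_zip_cond size_zip size_behead -subn1 ifT ?nth_behead //; lia.
apply: (iffP imsetP) => [[q /(nthP (x0, x0))[i hi <-] ->] | [i hi ->]].
  have hi' : i.+1 < size s by move: hi; rewrite size_zip ltn_min size_behead -subn1 ltn_subRL => /andP[_].
  by exists i => //; rewrite nth_pairs.
exists (nth x0 s i, nth x0 s i.+1) => //; rewrite -nth_pairs //.
by apply: mem_nth; rewrite size_zip ltn_min size_behead -subn1 ltn_subRL (ltnW hi).
Qed.

Lemma path_edges_path x p : path (fun a b => [set a; b] \in path_edges (x :: p)) x p.
Proof. by apply/(pathP x) => i hi; apply/(path_edgesP _ x); exists i. Qed.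

Lemma path_edges_rev s : path_edges (rev s) = path_edges s.
Proof.
suff sub (u : seq G) : {subset path_edges (rev u) <= path_edges u}.
  by apply/setP => E; apply/idP/idP => [/sub | ]; rewrite // -{1}(revK s) => /sub.
case: u => [|x0 u] E; first by case/imsetP.
case/(path_edgesP _ x0) => i; rewrite size_rev => hi ->.
apply/(path_edgesP _ x0); exists (size (x0 :: u) - i.+2); first lia.
rewrite !nth_rev; try lia.
by rewrite setUC; congr [set nth _ _ _; nth _ _ _]; lia.
Qed.

Lemma path_edges_index s x y : uniq s -> [set x; y] \in path_edges s ->
  [&& x \in s, y \in s & (index y s == (index x s).+1) || (index x s == (index y s).+1)].
Proof.
case: s => [|x0 u] us; first by case/imsetP.
case/(path_edgesP _ x0) => i hi /set2_eq.
have [si si1] : nth x0 (x0 :: u) i \in x0 :: u /\ nth x0 (x0 :: u) i.+1 \in x0 :: u.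
  by rewrite !mem_nth // ltnW.
have [ii ii1] : index (nth x0 (x0 :: u) i) (x0 :: u) = i /\
                index (nth x0 (x0 :: u) i.+1) (x0 :: u) = i.+1.
  by rewrite !index_uniq // ltnW.
by case=> -[-> ->]; rewrite si si1 ii ii1 eqxx ?orbT.
Qed.

Lemma cycle_edges_next s : uniq s -> cycle_edges s = [set [set x; next s x] | x in s].
Proof.
case: s => [|x0 u] us; first by apply/setP => E; apply/imsetP/imsetP => -[].
set s := x0 :: u.
have nth_pairs i : i < size s ->
    nth (x0, x0) (zip s (rot 1 s)) i = (nth x0 s i, next s (nth x0 s i)).
  by move=> hi; rewrite nth_zip ?size_rot // nth_rot // next_nth_mod.
apply/setP => E; apply/imsetP/imsetP => [[q /(nthP (x0, x0))[i hi <-] ->] | [x xs ->]].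
  rewrite size_zip size_rot minnn in hi.
  by exists (nth x0 s i); rewrite ?mem_nth ?nth_pairs.
exists (x, next s x) => //; rewrite -(nth_index x0 xs) -nth_pairs ?index_mem //.
by apply: mem_nth; rewrite size_zip size_rot minnn index_mem.
Qed.

Lemma cycle_edges_rot n s : uniq s -> cycle_edges (rot n s) = cycle_edges s.
Proof.
move=> us; rewrite !cycle_edges_next ?rot_uniq //.
by apply/setP => E; apply/imsetP/imsetP => -[x xs ->]; exists x;
  rewrite ?mem_rot ?(next_rot n us) // -(mem_rot n).
Qed.

Lemma cycle_edges_rev s : uniq s -> cycle_edges (rev s) = cycle_edges s.
Proof.
move=> us; rewrite !cycle_edges_next ?rev_uniq //.
apply/setP => E; apply/imsetP/imsetP => -[x xs ->]; rewrite ?mem_rev in xs *.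
  by exists (prev s x); rewrite ?mem_prev // next_rev // next_prev // setUC.
by exists (next s x); rewrite ?mem_rev ?mem_next // next_rev // prev_next // setUC.
Qed.

Lemma path_edges_sub_cycle_edges s : uniq s -> {subset path_edges s <= cycle_edges s}.
Proof.
case: s => [|x0 u] us E; first by case/imsetP.
case/(path_edgesP _ x0) => i hi ->; rewrite cycle_edges_next //.
apply/imsetP; exists (nth x0 (x0 :: u) i); first by rewrite mem_nth // ltnW.
by rewrite next_nth_mod ?modn_small // ltnW.
Qed.

Lemma cycle_edges_index s x y : uniq s -> [set x; y] \in cycle_edges s ->
  [&& x \in s, y \in s & succ_mod (size s) (index x s) (index y s) ||
                          succ_mod (size s) (index y s) (index x s)].
Proof.
move=> us; rewrite cycle_edges_next // => /imsetP[z zs /set2_eq].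
have next_index : index (next s z) s = (index z s).+1 %% size s.
  rewrite -{1}(nth_index z zs) next_nth_mod ?index_mem // index_uniq //.
  by rewrite ltn_mod; case: (s) zs.
have [zsize nzs] : index z s < size s /\ next s z \in s by rewrite index_mem mem_next.
by case=> -[-> ->]; rewrite zs nzs /succ_mod next_index zsize eqxx ?orbT.
Qed.

End EdgeSets.

Lemma path_succ_iota a p : path (fun i j => j == i.+1) a p -> a :: p = iota a (size p).+1.
Proof. by elim: p a => //= b p IH a /andP[/eqP-> /IH ->]. Qed.

Lemma path_succ_mod L a p i : a < L -> path (succ_mod L) a p -> i <= size p ->
  nth 0 (a :: p) i = (a + i) %% L.
Proof.
elim: p a i => [|b p IH] a [|i] ha pp hi //=; try by rewrite addn0 modn_small.
case/andP: pp => /andP[_ /eqP->] pp.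
by rewrite IH ?ltn_mod ?(leq_ltn_trans (leq0n a) ha) // modnDml addSnnS.
Qed.

Lemma succ_inj a b c : c == a.+1 -> c == b.+1 -> a = b.
Proof. by move=> /eqP-> /eqP[]. Qed.

Lemma succ_mod_inj L a b c : succ_mod L a c -> succ_mod L b c -> a = b.
Proof.
case/andP=> ha /eqP->; case/andP=> hb; rewrite !modS_small //.
move=> /eqP; do 2 case: eqP; lia.
Qed.

Section Positions.
Variables (T : eqType) (s : seq T).
Local Notation pos := (index^~ s).

Lemma walk_positions (step : rel nat) t :
  (forall a b c, step a c -> step b c -> a = b) ->
  (forall a b c, step a b -> step a c -> b = c) ->
  uniq t -> sorted (fun a b => [&& a \in s, b \in s & step (pos a) (pos b) || step (pos b) (pos a)]) t ->
  1 < size t -> {subset t <= s} /\ (sorted step (map pos t) \/ sorted step (map pos (rev t))).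
Proof.
move=> step_inj step_fun ut st ht.
have ts : {subset t <= s}.
  case: t ut st ht => [|x [|y p]] //= _ /andP[/and3P[xs ys _] pp] _ z.
  rewrite inE => /predU1P[-> //|]; elim: p y ys pp {xs} => [|w p IH] y ys /=.
    by move=> _; rewrite inE => /eqP->.
  by case/andP=> /and3P[_ ws _] pp; rewrite inE => /predU1P[-> //|]; apply: IH.
split=> //; rewrite map_rev; apply: sorted_symclosure => //.
  by rewrite map_inj_in_uniq // => a b /ts ain /ts bin; apply: index_inj.
by rewrite sorted_map; apply: sub_sorted st => a b /and3P[].
Qed.

Lemma sorted_succ_positions u : {subset u <= s} -> size u = size s ->
  sorted (fun i j => j == i.+1) (map pos u) -> u = s.
Proof.
case: u => [|x u] us hs; first by case: s hs.
move=> /path_succ_iota; rewrite size_map -/(map pos (x :: u)) => posE.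
have x0 : index x s = 0.
  have : index x s + size u \in map pos (x :: u) by rewrite posE mem_iota; lia.
  by case/mapP => w /us; rewrite -index_mem -hs /= => ws e; lia.
apply: (eq_from_nth (x0 := x)) => // i hi.
have ui : nth x (x :: u) i \in s by rewrite us // mem_nth.
by rewrite -(nth_index x ui) -(nth_map x 0 pos) // posE x0 nth_iota // -hs.
Qed.

Lemma sorted_succ_mod_positions u : 0 < size s -> {subset u <= s} -> size u = size s ->
  sorted (succ_mod (size s)) (map pos u) -> exists2 a, a < size s & u = rot a s.
Proof.
case: u => [|x u] s0 us hs; first by rewrite -hs in s0.
have xs : x \in s by rewrite us ?mem_head.
have xs' : index x s < size s by rewrite index_mem.
move=> /= posP; exists (index x s) => //.
apply: (eq_from_nth (x0 := x)); rewrite ?size_rot // => i hi.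
have hi' : i < size s by rewrite -hs.
have hip : i <= size (map pos u) by rewrite size_map -ltnS.
rewrite nth_rot ?(ltnW xs') // -(path_succ_mod xs' posP hip).
by rewrite -[index x s :: _]/(map pos (x :: u)) (nth_map x 0 pos) // nth_index // us // mem_nth.
Qed.

End Positions.

Section Fibers.
Variable G : graph.
Implicit Types s t : seq G.

Lemma path_edges_fiber s t : uniq s -> uniq t -> size t = size s -> 1 < size s ->
  path_edges t = path_edges s -> t = s \/ t = rev s.
Proof.
move=> us ut st hs E.
have walk : sorted (fun a b => [&& a \in s, b \in s & (index b s == (index a s).+1) ||
                                                      (index a s == (index b s).+1)]) t.
  case: (t) E => //= x p E; apply: sub_path (path_edges_path x p) => a b.
  by rewrite E; apply: path_edges_index.
have succ_fun a b c : b == a.+1 -> c == a.+1 -> b = c by move=> /eqP-> /eqP->.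
have [ts [fwd | bwd]] := walk_positions succ_inj succ_fun ut walk (ltac:(by rewrite st)).
  by left; apply: sorted_succ_positions.
have rts : {subset rev t <= s} by move=> z; rewrite mem_rev => /ts.
by right; rewrite -(sorted_succ_positions rts (etrans (size_rev t) st) bwd) revK.
Qed.

Lemma cycle_edges_fiber s t : uniq s -> uniq t -> size t = size s -> 2 < size s ->
  cycle_edges t = cycle_edges s -> exists2 a, a < size s & t = rot a s \/ rev t = rot a s.
Proof.
move=> us ut st hs E.
have walk : sorted (fun a b => [&& a \in s, b \in s &
                                 succ_mod (size s) (index a s) (index b s) ||
                                 succ_mod (size s) (index b s) (index a s)]) t.
  case: (t) ut E => // x p ut E; apply: sub_path (path_edges_path x p) => a b.
  by move/(path_edges_sub_cycle_edges ut); rewrite E; apply: cycle_edges_index.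
have succ_mod_fun a b c : succ_mod (size s) a b -> succ_mod (size s) a c -> b = c.
  by move=> /andP[_ /eqP->] /andP[_ /eqP->].
have s0 : 0 < size s by rewrite ltnW // ltnW.
have [ts [fwd | bwd]] := walk_positions (@succ_mod_inj _) succ_mod_fun ut walk (ltac:(by rewrite st ltnW)).
  by have [a ha ->] := sorted_succ_mod_positions s0 ts st fwd; exists a => //; left.
have rts : {subset rev t <= s} by move=> z; rewrite mem_rev => /ts.
have [a ha rtE] := sorted_succ_mod_positions s0 rts (etrans (size_rev t) st) bwd.
by exists a => //; right.
Qed.

End Fibers.

(** * Counting simple walks by depth-first search *)

Section WalkEnumeration.
Variables (T : finType) (e : rel T) (vs : seq T) (nbrs : T -> seq T) (eqb : rel T).
Variable closed : bool.
Hypotheses (vs_uniq : uniq vs) (vsP : forall x, x \in vs).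
Hypotheses (nbrsE : forall x, nbrs x = filter (e x) vs) (eqbE : eqb =2 eq_op).

Definition simple_walk (s : seq T) := uniq s && sorted e s.

Definition closes (s : seq T) := if s is x :: p then e (last x p) x else false.

Definition counted_walk (s : seq T) := simple_walk s && (closed ==> closes s).

(* [p] is the walk built so far, most recent vertex first; [nbrs] and [eqb] are
   fast implementations of [filter (e x) vs] and [==]. *)
Fixpoint count_walks k (p : seq T) : nat :=
  if k is k'.+1 then
    sumn [seq count_walks k' (y :: p) |
           y <- (if p is x :: _ then nbrs x else vs) & ~~ has (eqb y) p]
  else closed ==> (if p is y :: q then has (eqb (last y q)) (nbrs y) else false).

Fixpoint seqs_of_size n : seq (seq T) :=
  if n is n'.+1 then [seq x :: q | x <- vs, q <- seqs_of_size n'] else [:: [::]].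

Lemma simple_walk_prefix r q : simple_walk (r ++ q) -> simple_walk r.
Proof.
rewrite /simple_walk cat_uniq => /andP[/andP[-> _]].
by case: r => //= x r; rewrite cat_path => /andP[].
Qed.

Lemma simple_walk_rcons p y : simple_walk (rev p) ->
  simple_walk (rcons (rev p) y) = (y \notin p) && (if p is x :: _ then e x y else true).
Proof.
rewrite /simple_walk rcons_uniq mem_rev => /andP[-> sp]; rewrite andbT; congr andb.
case: p sp => [|x p] //; rewrite rev_cons.
case: (rev p) => [|z r] /=; first by rewrite andbT.
by move=> sp; rewrite rcons_path sp last_rcons.
Qed.

Lemma has_nbrs_closes y q : has (eqb (last y q)) (nbrs y) = closes (rev (y :: q)).
Proof.
have -> : closes (rev (y :: q)) = e y (last y q).
  case/lastP: q => [|q z] //.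
  by rewrite -rcons_cons rev_rcons /= rev_cons !last_rcons.
rewrite (eq_has (a2 := pred1 (last y q))) => [|x]; last by rewrite /= eqbE eq_sym.
by rewrite has_pred1 nbrsE mem_filter vsP andbT.
Qed.

Lemma count_walksE k p : simple_walk (rev p) ->
  count_walks k p = count (fun q => counted_walk (rev p ++ q)) (seqs_of_size k).
Proof.
elim: k p => [|k IH] p wp /=.
  by rewrite cats0 addn0 /counted_walk wp; case: p wp => //= y q _; rewrite has_nbrs_closes.
have hasE y : has (eqb y) p = (y \in p).
  by rewrite -has_pred1; apply: eq_has => z; rewrite /= eqbE eq_sym.
pose C y := (y \notin p) && (if p is x :: _ then e x y else true).
rewrite count_flatten sumnE !big_map sumnE big_map big_filter.
transitivity (\sum_(y <- vs | C y) count_walks k (y :: p)).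
  rewrite /C; case: (p) hasE => [|x q] hasE; last rewrite nbrsE big_filter_cond.
    by apply: eq_bigl => y; rewrite hasE andbT.
  by apply: eq_bigl => y; rewrite hasE andbC.
rewrite big_mkcond big_map; apply: eq_bigr => y _; rewrite count_map.
have Cy := simple_walk_rcons y wp; rewrite -/(C y) in Cy.
case: ifP => hy.
  rewrite IH; last by rewrite rev_cons Cy.
  by apply: eq_count => q; rewrite /= rev_cons cat_rcons.
rewrite (@eq_count _ _ pred0) ?count_pred0 // => q /=.
by apply/negP => /andP[]; rewrite -cat_rcons => /simple_walk_prefix; rewrite Cy hy.
Qed.

Lemma mem_seqs_of_size n s : (s \in seqs_of_size n) = (size s == n).
Proof.
elim: n s => [|n IH] [|x s] //=.
  by apply/allpairsP => -[[y q] [_ _]].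
rewrite eqSS -IH; apply/allpairsP/idP => [[[y q] [_ qn [_ ->]]] // | sn].
by exists (x, s).
Qed.

Lemma uniq_seqs_of_size n : uniq (seqs_of_size n).
Proof. by elim: n => //= n IH; apply: allpairs_uniq => // -[x q] [y r] _ _ [-> ->]. Qed.

Lemma card_tuples_count n (Q : pred (seq T)) :
  #|[pred t : n.-tuple T | Q t]| = count Q (seqs_of_size n).
Proof.
rewrite cardE /enum_mem size_filter -(count_map val Q).
apply/permP/uniq_perm; first by rewrite (map_inj_uniq val_inj) -enumT enum_uniq.
  exact: uniq_seqs_of_size.
move=> s; rewrite mem_seqs_of_size; apply/mapP/idP => [[t _ ->] | /eqP sn].
  by rewrite size_tuple.
by exists (Tuple (introT eqP sn)); rewrite ?mem_enum.
Qed.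

Lemma count_walks_card n : count_walks n [::] = #|[pred t : n.-tuple T | counted_walk t]|.
Proof. by rewrite (card_tuples_count n counted_walk) count_walksE. Qed.

End WalkEnumeration.

Lemma rot_neq_rev_rot (T : eqType) (s : seq T) a b : uniq s -> 2 < size s ->
  rot a s != rev (rot b s).
Proof.
case: s => [|x0 [|x1 [|x2 p]]] // us _; apply/eqP => E.
set s := [:: x0, x1, x2 & p] in us E *.
have next_prev : next s =1 prev s.
  by move=> x; rewrite -(next_rot a us) E next_rev ?rot_uniq // prev_rot.
have [x10 x20] : x1 != x0 /\ x2 != x0.
  by move: us; rewrite /s /= !inE => /andP[]; rewrite !negb_or eq_sym => /and3P[-> + _];
    rewrite eq_sym.
have n0 : next s x0 = x1 by rewrite /= eqxx.
have n1 : next s x1 = x2 by rewrite /= (negbTE x10) eqxx.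
by move: x20; rewrite -n1 next_prev -n0 prev_next // eqxx.
Qed.

Section Counting.
Variable G : graph.
Implicit Types s t : seq G.

Lemma gadj_sorted_rev s : sorted (@gadj G) (rev s) = sorted (@gadj G) s.
Proof. by rewrite rev_sorted; apply: eq_sorted => x y; rewrite gadj_sym. Qed.

Lemma is_path_seqE L s :
  is_path_seq L s = [&& 0 < L, size s == L.+1, uniq s & sorted (@gadj G) s].
Proof. by case: s => [|x p]; rewrite /is_path_seq //= !andbF. Qed.

Lemma is_path_seq_rev L s : is_path_seq L (rev s) = is_path_seq L s.
Proof. by rewrite !is_path_seqE size_rev rev_uniq gadj_sorted_rev. Qed.

Lemma is_cycle_seq_rot L a s : is_cycle_seq L (rot a s) = is_cycle_seq L s.
Proof. by rewrite /is_cycle_seq size_rot rot_uniq rot_cycle. Qed.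

Lemma is_cycle_seq_rev L s : is_cycle_seq L (rev s) = is_cycle_seq L s.
Proof.
rewrite /is_cycle_seq size_rev rev_uniq rev_cycle.
by congr [&& _, _, _ & _]; apply: eq_cycle => x y; rewrite gadj_sym.
Qed.

Lemma is_path_seq_walk L s :
  is_path_seq L s = [&& 0 < L, size s == L.+1 & counted_walk (@gadj G) false s].
Proof. by rewrite is_path_seqE /counted_walk /simple_walk andbT. Qed.

Lemma is_cycle_seq_walk L s :
  is_cycle_seq L s = [&& 2 < L, size s == L & counted_walk (@gadj G) true s].
Proof.
case: s => [|x p]; rewrite /is_cycle_seq /counted_walk /simple_walk /=.
  by case: L => [|[|[|L]]].
by rewrite rcons_path !andbA.
Qed.

Lemma card_path_seqs L : 0 < L ->
  #|[pred t : L.+1.-tuple G | is_path_seq L t]| = 2 * count_paths G L.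
Proof.
move=> L0; rewrite /count_paths -[LHS]sum1_card.
rewrite (partition_big_imset (fun t : L.+1.-tuple G => path_edges t)) /= mulnC -sum_nat_const.
apply: eq_bigr => _ /imsetP[s sP ->]; rewrite sum1dep_card cardsE.
have uniq_of t : is_path_seq L t -> uniq t by rewrite is_path_seqE => /and4P[].
have hs : size s = L.+1 := size_tuple s.
have rsP : is_path_seq L [tuple of rev s] by rewrite is_path_seq_rev.
have s_rs : s != [tuple of rev s].
  apply/eqP => /(congr1 (fun t : L.+1.-tuple G => nth (thead s) t 0)).
  rewrite /= nth_rev hs // subn1 /= => /eqP; rewrite nth_uniq ?hs ?uniq_of //.
  by move/eqP=> L0E; rewrite -L0E in L0.
transitivity #|pred2 s [tuple of rev s]|; last by rewrite card2 s_rs.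
apply: eq_card => t; rewrite !inE.
apply/andP/orP => [[tP /eqP E] | [/eqP-> | /eqP->]]; last 2 first.
- by [].
- by split; [exact: rsP | rewrite /= path_edges_rev].
have [] := path_edges_fiber (uniq_of _ sP) (uniq_of _ tP) _ _ E; rewrite ?size_tuple //.
  by move/val_inj->; left.
by move=> tE; right; apply/eqP/val_inj.
Qed.

Lemma card_cycle_seqs L : 2 < L ->
  #|[pred t : L.-tuple G | is_cycle_seq L t]| = (L * 2) * count_cycles G L.
Proof.
move=> L2; rewrite /count_cycles -[LHS]sum1_card.
rewrite (partition_big_imset (fun t : L.-tuple G => cycle_edges t)) /= mulnC -sum_nat_const.
apply: eq_bigr => _ /imsetP[s sP ->]; rewrite sum1dep_card cardsE.
have uniq_of t : is_cycle_seq L t -> uniq t by case/and4P.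
rewrite inE in sP; have us := uniq_of _ sP; have hs : size s = L := size_tuple s.
pose g (ab : 'I_L * bool) : L.-tuple G :=
  if ab.2 then [tuple of rot ab.1 s] else [tuple of rev (rot ab.1 s)].
have L0 : 0 < L by apply: leq_ltn_trans L2.
have rot_inj (a b : 'I_L) : rot a s = rot b s -> a = b.
  have head_rot (c : 'I_L) : nth (tnth s a) (rot c s) 0 = nth (tnth s a) s c.
    by rewrite nth_rot ?hs ?addn0 ?modn_small // ltnW.
  move=> /(congr1 (fun u => nth (tnth s a) u 0)); rewrite !head_rot => /eqP.
  by rewrite nth_uniq ?hs // => /eqP; apply: val_inj.
have g_inj : injective g.
  have neq (a b : nat) : rot a s != rev (rot b s) by rewrite rot_neq_rev_rot ?hs.
  move=> [a []] [b []] /(congr1 val) /=.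
  - by move/rot_inj->.
  - by move/eqP; rewrite (negbTE (neq _ _)).
  - by move/esym/eqP; rewrite (negbTE (neq _ _)).
  - by move/(can_inj revK)/rot_inj->.
transitivity #|g @: [set: 'I_L * bool]|; last first.
  by rewrite card_imset // cardsT card_prod card_ord card_bool.
apply: eq_card => t; apply/andP/imsetP => [[tP /eqP E] | [[a b] _ ->]].
  have st : size t = size s by rewrite !size_tuple.
  case: (cycle_edges_fiber us (uniq_of _ tP) st (ltac:(by rewrite hs)) E) => a.
  rewrite hs => ha [tE | tE].
  - by exists (Ordinal ha, true); last by apply: val_inj.
  - by exists (Ordinal ha, false); last by apply: val_inj; rewrite /= -tE revK.
rewrite inE; case: b => /=.
  by rewrite is_cycle_seq_rot sP cycle_edges_rot.
by rewrite is_cycle_seq_rev is_cycle_seq_rot sP cycle_edges_rev ?rot_uniq // cycle_edges_rot.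
Qed.

End Counting.

(** * Subgraph MPNNs on strongly regular graphs *)

Section AssociationClasses.
Variable G : graph.
Implicit Types i j l : G.

Definition assoc_class i j : nat := if i == j then 0 else if gadj i j then 1 else 2.

Definition strongly_regular (k lam mu : nat) : Prop :=
  forall i j, #|[pred l | gadj i l && gadj j l]| = if i == j then k else if gadj i j then lam else mu.

Lemma assoc_class_lt3 i j : assoc_class i j < 3.
Proof. by rewrite /assoc_class; case: (i =P j) => //; case: gadj. Qed.

Lemma assoc_class0 i j : (assoc_class i j == 0) = (i == j).
Proof. by rewrite /assoc_class; case: (i =P j) => //; case: gadj. Qed.

Lemma assoc_class1 i j : (assoc_class i j == 1) = gadj i j.
Proof.
rewrite /assoc_class; case: (i =P j) => [<-|_]; last by case: gadj.
by rewrite gadj_irr.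
Qed.

Lemma sum_by_assoc_class (V : nmodType) i (P : pred G) (F : nat -> V) :
  (\sum_(l | P l) F (assoc_class i l) =
   \sum_(b < 3) F b *+ #|[pred l | P l && (assoc_class i l == b)]|)%R.
Proof.
rewrite (partition_big (fun l => Ordinal (assoc_class_lt3 i l)) xpredT) //=.
apply: eq_bigr => b _; rewrite -sumr_const; apply: eq_big => l; first by rewrite !inE.
by case/andP=> _ /eqP <-.
Qed.

Lemma card_by_assoc_class i (P : pred G) :
  #|[pred l | P l]| = \sum_(b < 3) #|[pred l | P l && (assoc_class i l == b)]|.
Proof.
rewrite -sum1_card (partition_big (fun l => Ordinal (assoc_class_lt3 i l)) xpredT) //=.
by apply: eq_bigr => b _; rewrite sum1_card; apply: eq_card => l; rewrite !inE.
Qed.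

End AssociationClasses.

Definition srg_common (k lam mu c : nat) : nat := nth 0 [:: k; lam; mu] c.

Definition srg_nbr_count (k lam mu a b : nat) : nat :=
  match b with
  | 0 => a == 1
  | 1 => srg_common k lam mu a
  | 2 => k - (a == 1) - srg_common k lam mu a
  | _ => 0
  end.

Definition srg_classes (n k : nat) : seq nat := 0 :: nseq k 1 ++ nseq (n - k - 1) 2.

Section StronglyRegularGraph.
Variables (G : graph) (n k lam mu : nat).
Hypotheses (cardG : #|G| = n) (srgG : strongly_regular G k lam mu) (mu_gt0 : 0 < mu).
Implicit Types i j l : G.

Lemma card_common_nbrs i j :
  #|[pred l | gadj i l && gadj j l]| = srg_common k lam mu (assoc_class i j).
Proof. by rewrite srgG /assoc_class; case: (i =P j) => //; case: gadj. Qed.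

Lemma card_nbrs i : #|[pred l | gadj i l]| = k.
Proof. by rewrite -(eq_card (fun l => andbb (gadj i l))) srgG eqxx. Qed.

Lemma card_nbr_class i j b :
  #|[pred l | gadj j l && (assoc_class i l == b)]| = srg_nbr_count k lam mu (assoc_class i j) b.
Proof.
have c0 : #|[pred l | gadj j l && (assoc_class i l == 0)]| = (assoc_class i j == 1).
  rewrite assoc_class1 gadj_sym; have [ji | nji] := boolP (gadj j i).
    apply: (etrans _ (card1 i)); apply: eq_card => l; rewrite !inE assoc_class0 eq_sym.
    by case: (l =P i) => [->|_]; rewrite ?ji ?andbF.
  apply: eq_card0 => l; rewrite !inE assoc_class0.
  by case: (i =P l) => [<-|_]; rewrite ?(negbTE nji) ?andbF.
have c1 : #|[pred l | gadj j l && (assoc_class i l == 1)]| = srg_common k lam mu (assoc_class i j).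
  by rewrite -card_common_nbrs; apply: eq_card => l; rewrite !inE assoc_class1 andbC.
case: b => [|[|[|b]]] //=.
  move: (card_by_assoc_class i (gadj j)); rewrite card_nbrs !big_ord_recr big_ord0 /= c0 c1 => kE.
  by rewrite {1}kE add0n -addnA addKn addKn.
apply: eq_card0 => l; rewrite !inE; have := assoc_class_lt3 i l.
by case: eqP => [->|_]; rewrite ?andbF.
Qed.


Lemma common_nbr i j : assoc_class i j = 2 -> exists2 l, gadj i l & gadj j l.
Proof.
move=> c2; have : 0 < #|[pred l | gadj i l && gadj j l]| by rewrite card_common_nbrs c2.
by case/card_gt0P => l /andP[il jl]; exists l.
Qed.

Lemma within_assoc_class K i j : within K i j = (assoc_class i j <= K).
Proof.
have within1 (x y : G) : within 1 x y = (x == y) || gadj x y.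
  rewrite /=; congr orb; apply/existsP/idP => [[l /andP[/eqP-> //]] | ij].
  by exists x; rewrite eqxx.
case: K => [|[|K]]; first by rewrite /= leqn0 assoc_class0.
  by rewrite within1 /assoc_class; case: (i =P j) => //; case: gadj.
have within2 : within 2 i j.
  apply/orP; case: (boolP (within 1 i j)) => [|ij]; [by left | right].
  have c2 : assoc_class i j = 2.
    by move: ij; rewrite within1 /assoc_class; case: (i =P j) => //; case: gadj.
  have [l il jl] := common_nbr c2.
  apply/existsP; exists l; apply/andP; split; last by rewrite gadj_sym.
  by rewrite -/(within 1 i l) within1 il orbT.
have -> : within K.+2 i j by elim: K => // K IH; apply/orP; left.
by apply/esym/(@leq_trans 2); first by rewrite -ltnS assoc_class_lt3.
Qed.

Lemma assoc_class_lt_card i j : assoc_class i j < #|G|.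
Proof.
have := assoc_class_lt3 i j; case c: (assoc_class i j) => [|[|[|//]]] _.
- by apply/card_gt0P; exists i.
- apply: leq_trans (max_card [set i; j]).
  by rewrite cards2 -assoc_class0 c.
have [l il jl] := common_nbr c.
have nadj (x y : G) : gadj x y -> x != y by apply: contraTneq => ->; rewrite gadj_irr.
apply: (leq_trans _ (max_card (i |: [set j; l]))).
have ij : i != j by rewrite -assoc_class0 c.
by rewrite cardsU1 cards2 !inE negb_or ij (nadj _ _ il) (nadj _ _ jl).
Qed.

Lemma spd_assoc_class i j : spd i j = Some (assoc_class i j).
Proof.
rewrite /spd (eq_find (a2 := fun d => assoc_class i j <= d)) => [|d]; last first.
  exact: within_assoc_class.
move: (assoc_class_lt_card i j) (assoc_class_lt3 i j).
by case: (assoc_class i j) => [|[|[|c]]] //; case: #|G| => [|[|[|N]]].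
Qed.

Lemma card_assoc_class i c : #|[pred j | assoc_class i j == c]| = count_mem c (srg_classes n k).
Proof.
rewrite /srg_classes /= count_cat !count_nseq.
have c0 : #|[pred j | assoc_class i j == 0]| = 1.
  by rewrite -(card1 i); apply: eq_card => j; rewrite !inE assoc_class0 eq_sym.
have c1 : #|[pred j | assoc_class i j == 1]| = k.
  by rewrite -(card_nbrs i); apply: eq_card => j; rewrite !inE assoc_class1.
case: c => [|[|[|c]]]; rewrite /= ?c0 ?c1 ?mul0n ?mul1n ?add0n ?addn0 //.
  have := card_by_assoc_class i predT; rewrite !big_ord_recr big_ord0 /= c0 c1.
  by rewrite (_ : #|[pred: G | true]| = n) -?cardG //; lia.
apply: eq_card0 => j; rewrite !inE; have := assoc_class_lt3 i j.
by case: eqP => [->|].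
Qed.

Section SubgraphMPNN.
Variables (R : realType) (m : mpnn R).
Local Open Scope ring_scope.

Definition in_sub_class (c : nat) : bool :=
  match rule m with NodeDeletion => c != 0%N | EgoNet K => (c <= K)%N end.

Definition zlabel_class (c : nat) : 'rV[R]_(labdim (lab m)) :=
  match lab m as l return 'rV[R]_(labdim l) with
  | NoLabel => 0
  | IdLabel => const_mx (if c == 0%N then 1 else 0)
  | SpdLabel => const_mx c%:R
  end.

Definition sub_nbr_count (a b : nat) : nat :=
  if in_sub_class a && in_sub_class b then srg_nbr_count k lam mu a b else 0.

Fixpoint hclass (t : nat) : nat -> 'rV[R]_(sdim (lab m) (edim m) t) :=
  match t as t0 return nat -> 'rV[R]_(sdim (lab m) (edim m) t0) with
  | 0%N => zlabel_class
  | t'.+1 => fun a =>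
      @Upd R m t' (hclass t' a)
        (\sum_(b < 3) @Msg R m t' (hclass t' a) (hclass t' b) *+ sub_nbr_count a b)
  end.

Definition hnode_class : 'rV[R]_(ndim m) :=
  @Rnode R m [seq hclass (nlayers m) c | c <- srg_classes n k & in_sub_class c].

Lemma in_sub_assoc_class i j : in_sub m i j = in_sub_class (assoc_class i j).
Proof.
rewrite /in_sub /in_sub_class; case: (rule m) => [|K]; last exact: within_assoc_class.
by rewrite assoc_class0 eq_sym.
Qed.

Lemma zlabel_assoc_class i j : zlabel m i j = zlabel_class (assoc_class i j).
Proof. by rewrite /zlabel /zlabel_class spd_assoc_class; case: (lab m); rewrite ?assoc_class0. Qed.

Lemma card_sub_nbr_class i j b :
  #|[pred l | sub_nbr m i j l && (assoc_class i l == b)]| = sub_nbr_count (assoc_class i j) b.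
Proof.
rewrite /sub_nbr /sub_nbr_count; case: ifP => [/andP[ij ib] | nsub].
  rewrite -card_nbr_class; apply: eq_card => l; rewrite !inE !in_sub_assoc_class ij /=.
  by case: eqP => [->|]; rewrite ?ib ?andbF.
apply: eq_card0 => l; rewrite !inE !in_sub_assoc_class.
by case: eqP => [->|]; rewrite ?andbF // andbAC nsub.
Qed.

Lemma hstate_assoc_class t i j : hstate m t i j = hclass t (assoc_class i j).
Proof.
elim: t j => [|t IH] j /=; first exact: zlabel_assoc_class.
rewrite IH; congr (Upd _ _); under eq_bigr => l _ do rewrite IH.
rewrite (sum_by_assoc_class i (sub_nbr m i j) (fun b => Msg (hclass t _) (hclass t b))).
by apply: eq_bigr => b _; rewrite card_sub_nbr_class.
Qed.

Lemma hnode_srg i : hnode m i = hnode_class.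
Proof.
rewrite /hnode /hnode_class; under eq_map => j do rewrite hstate_assoc_class.
rewrite (map_comp (hclass _) (assoc_class i)); apply/Rnode_multiset/perm_map.
apply/allP => c _; apply/eqP; rewrite count_filter count_map.
transitivity #|[pred j | in_sub m i j && (assoc_class i j == c)]|.
  by rewrite cardE /enum_mem size_filter count_filter; apply: eq_count => j; rewrite !inE andbC.
have -> : count (predI (pred1 c) in_sub_class) (srg_classes n k) =
          if in_sub_class c then count_mem c (srg_classes n k) else 0%N.
  case: ifP => sub_c; last rewrite -(count_pred0 (srg_classes n k));
  by apply: eq_count => x /=; case: eqP => [->|]; rewrite ?sub_c ?andbT.
case: ifP => sub_c.
  rewrite -(card_assoc_class i); apply: eq_card => j; rewrite !inE in_sub_assoc_class.
  by case: eqP => [->|]; rewrite ?sub_c ?andbF.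
apply: eq_card0 => j; rewrite !inE in_sub_assoc_class.
by case: eqP => [->|]; rewrite ?sub_c ?andbF.
Qed.

Lemma hgraph_srg : hgraph m G = @Rgraph R m (nseq n hnode_class).
Proof.
rewrite /hgraph -cardG cardE; congr Rgraph.
by elim: (enum G) => //= i s ->; rewrite hnode_srg.
Qed.

End SubgraphMPNN.

End StronglyRegularGraph.

Theorem hgraph_strongly_regular (G1 G2 : graph) n k lam mu :
  strongly_regular G1 k lam mu -> strongly_regular G2 k lam mu -> 0 < mu ->
  #|G1| = n -> #|G2| = n -> forall (R : realType) (m : mpnn R), hgraph m G1 = hgraph m G2.
Proof.
move=> srg1 srg2 mu_gt0 card1 card2 R m.
by rewrite (hgraph_srg card1 srg1 mu_gt0) (hgraph_srg card2 srg2 mu_gt0).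
Qed.

(** * The rook's graph and the Shrikhande graph *)

Section Z4xZ4.
Local Open Scope ring_scope.

Definition vertex := ('Z_4 * 'Z_4)%type.

Definition vertices : seq vertex := [seq (i%:R, j%:R) | i <- iota 0 4, j <- iota 0 4].

Lemma mem_vertices x : x \in vertices.
Proof. by case: x => [[[|[|[|[|?]]]] ?] [[|[|[|[|?]]]] ?]]. Qed.

Lemma vertices_uniq : uniq vertices.
Proof. by []. Qed.

Lemma card_vertices (P : pred vertex) : #|[pred x | P x]| = count P vertices.
Proof.
rewrite -size_filter; have /card_uniqP <- := filter_uniq P vertices_uniq.
by apply: eq_card => x; rewrite !inE mem_filter mem_vertices andbT.
Qed.

Definition vertex_eqb (x y : vertex) : bool := eqn x.1 y.1 && eqn x.2 y.2.

Lemma vertex_eqbE : vertex_eqb =2 eq_op.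
Proof. by move=> [a b] [c d]; rewrite /vertex_eqb xpair_eqE /=; congr andb; apply/eqnP/eqP. Qed.

Definition nbr_table (e : rel vertex) : seq (seq vertex) :=
  [seq filter (e x) vertices | x <- vertices].

Definition table_nbrs (t : seq (seq vertex)) (x : vertex) : seq vertex :=
  nth [::] t (4 * x.1 + x.2)%N.

Lemma table_nbrsE e x : table_nbrs (nbr_table e) x = filter (e x) vertices.
Proof.
have [hx ex] : (4 * x.1 + x.2 < size vertices)%N /\ nth 0 vertices (4 * x.1 + x.2) = x.
  by split; [|apply/eqP]; case: x => [[[|[|[|[|?]]]] ?] [[|[|[|[|?]]]] ?]].
by rewrite /table_nbrs (nth_map 0) // ex.
Qed.

Definition rook (x y : vertex) : bool := (x.1 == y.1) (+) (x.2 == y.2).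

Lemma rook_sym : symmetric rook.
Proof. by move=> x y; rewrite /rook eq_sym [x.2 == _]eq_sym. Qed.

Lemma rook_irr : irreflexive rook.
Proof. by move=> x; rewrite /rook !eqxx. Qed.

Definition rook_graph : graph := Graph rook_sym rook_irr.

Definition shrikhande_steps : seq vertex :=
  [:: (1, 0); (-1, 0); (0, 1); (0, -1); (1, 1); (-1, -1)].

Definition shrikhande_adj (x y : vertex) : bool := y - x \in shrikhande_steps.

Lemma shrikhande_sym : symmetric shrikhande_adj.
Proof.
have stepsN d : (- d \in shrikhande_steps) = (d \in shrikhande_steps).
  by case: d => [[[|[|[|[|?]]]] ?] [[|[|[|[|?]]]] ?]].
by move=> x y; rewrite /shrikhande_adj -opprB stepsN.
Qed.

Lemma shrikhande_irr : irreflexive shrikhande_adj.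
Proof. by move=> x; rewrite /shrikhande_adj subrr. Qed.

Definition shrikhande : graph := Graph shrikhande_sym shrikhande_irr.

Section Checks.
Variables (e : rel vertex) (e_sym : symmetric e) (e_irr : irreflexive e).
Local Notation G := (Graph e_sym e_irr).

Lemma card_graph : #|G| = 16%N.
Proof. by rewrite cardT -cardE card_vertices. Qed.

Lemma strongly_regular_check k lam mu :
  all (fun i => all (fun j => count (fun l => e i l && e j l) vertices ==
                              if i == j then k else if e i j then lam else mu) vertices) vertices ->
  strongly_regular G k lam mu.
Proof.
move=> /allP srg i j; rewrite card_vertices; apply/eqP.
exact: (allP (srg i (mem_vertices i)) j (mem_vertices j)).
Qed.

Let walks := count_walks vertices (table_nbrs (nbr_table e)) vertex_eqb.

Lemma count_walks_graph closed n :
  walks closed n [::] = #|[pred t : n.-tuple G | counted_walk e closed t]|.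
Proof. exact: (count_walks_card _ vertices_uniq mem_vertices (table_nbrsE e) vertex_eqbE). Qed.

Lemma count_cycles_walks N : walks true 8 [::] == (16 * N)%N -> count_cycles G 8 = N.
Proof.
move=> /eqP hN; apply/eqP; rewrite -(eqn_pmul2l (isT : (0 < 16)%N)) -hN count_walks_graph.
rewrite -[16%N]/(8 * 2)%N -card_cycle_seqs //; apply/eqP/eq_card => t.
by rewrite !inE is_cycle_seq_walk size_tuple.
Qed.

Lemma count_paths_walks N : walks false 9 [::] == (2 * N)%N -> count_paths G 8 = N.
Proof.
move=> /eqP hN; apply/eqP; rewrite -(eqn_pmul2l (isT : (0 < 2)%N)) -hN count_walks_graph.
rewrite -card_path_seqs //; apply/eqP/eq_card => t.
by rewrite !inE is_path_seq_walk size_tuple.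
Qed.

End Checks.

End Z4xZ4.

Lemma rook_graph_srg : strongly_regular rook_graph 6 2 2.
Proof. by apply: strongly_regular_check; vm_compute. Qed.

Lemma shrikhande_srg : strongly_regular shrikhande 6 2 2.
Proof. by apply: strongly_regular_check; vm_compute. Qed.

Lemma rook_graph_cycles : count_cycles rook_graph 8 = 11952.
Proof. by apply: count_cycles_walks; vm_cast_no_check (erefl true). Qed.

Lemma shrikhande_cycles : count_cycles shrikhande 8 = 11688.
Proof. by apply: count_cycles_walks; vm_cast_no_check (erefl true). Qed.

Lemma rook_graph_paths : count_paths rook_graph 8 = 880128.
Proof. by apply: count_paths_walks; vm_cast_no_check (erefl true). Qed.

Lemma shrikhande_paths : count_paths shrikhande 8 = 877440.
Proof. by apply: count_paths_walks; vm_cast_no_check (erefl true). Qed.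

Theorem proposition1 :
  (exists G1 G2 : graph,
      count_cycles G1 8 <> count_cycles G2 8 /\
      forall (R : realType) (m : mpnn R), valid_mpnn m ->
        hgraph m G1 = hgraph m G2) /\
  (exists G1 G2 : graph,
      count_paths G1 8 <> count_paths G2 8 /\
      forall (R : realType) (m : mpnn R), valid_mpnn m ->
        hgraph m G1 = hgraph m G2).
Proof.
have same_hgraph R (m : mpnn R) : valid_mpnn m -> hgraph m rook_graph = hgraph m shrikhande.
  move=> _; exact: (hgraph_strongly_regular rook_graph_srg shrikhande_srg isT
    (card_graph rook_sym rook_irr) (card_graph shrikhande_sym shrikhande_irr)).
split; exists rook_graph, shrikhande; split=> //.
  by rewrite rook_graph_cycles shrikhande_cycles.
by rewrite rook_graph_paths shrikhande_paths; apply/eqP; vm_compute.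
Qed.
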